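(* There is a constant $C_{\rm dist}>0$ depending only on $d$, $\widehat{\mathcal T}^0$ and $(p_1,\dots,p_d)$ such that: for every admissible hierarchical mesh $\widehat{\mathcal T}_\bullet$ and every $\widehat T'\in\widehat{\mathcal T}_\bullet$, with $\widehat{\mathcal T}_\circ={\tt refine}(\widehat{\mathcal T}_\bullet,\{\widehat T'\})$, it holds that ${\rm dist}(\widehat T,\widehat T')\le C_{\rm dist}\,2^{-{\rm level}(\widehat T)}$ for all $\widehat T\in\widehat{\mathcal T}_\circ\setminus\widehat{\mathcal T}_\bullet$, where ${\rm dist}$ denotes the Euclidean distance between the midpoints of the two boxes.
   Context: Parameter domain $\widehat\Omega=(0,1)^d$, $d\ge2$; degrees $p_1,\dots,p_d\ge1$. For each $i$, $\widehat{\mathcal K}^0_i$ is a $p_i$-open knot vector in $[0,1]$ (first $p_i+1$ knots $0$, last $p_i+1$ knots $1$, interior multiplicities $\le p_i$); $\widehat{\mathcal K}^{k+1}_i$ arises from $\widehat{\mathcal K}^k_i$ by inserting each nondegenerate span's midpoint once. $\widehat{\mathcal B}^k$: tensor-product B-splines of degree $(p_1,\dots,p_d)$ for $\widehat{\mathcal K}^k$; $\widehat{\mathcal T}^k$: closed cells of level $k$. A hierarchical mesh is given by closed sets $[0,1]^d=\widehat\Omega^0_\bullet\supseteq\widehat\Omega^1_\bullet\supseteq\cdots$, each $\widehat\Omega^k_\bullet$ ($k\ge1$) a union of cells of $\widehat{\mathcal T}^{k-1}$, eventually empty; mesh $\widehat{\mathcal T}_\bullet=\bigcup_k\{\widehat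 T\in\widehat{\mathcal T}^k:\widehat T\subseteq\widehat\Omega^k_\bullet,\widehat T\not\subseteq\widehat\Omega^{k+1}_\bullet\}$, ${\rm level}(\widehat T)=k$; hierarchical basis $\widehat{\mathcal H}_\bullet=\bigcup_k\{\widehat\beta\in\widehat{\mathcal B}^k:{\rm supp}\,\widehat\beta\subseteq\widehat\Omega^k_\bullet,{\rm supp}\,\widehat\beta\not\subseteq\widehat\Omega^{k+1}_\bullet\}$. Neighbors $\mathcal N_\bullet(\widehat T)=\{\widehat T'\in\widehat{\mathcal T}_\bullet:\exists\widehat\beta\in\widehat{\mathcal H}_\bullet,\widehat T,\widehat T'\subseteq{\rm supp}\,\widehat\beta\}$; bad neighbors $\mathcal N^{\rm bad}_\bullet(\widehat T)=\{\widehat T'\in\mathcal N_\bullet(\widehat T):{\rm level}(\widehat T')={\rm level}(\widehat T)-1\}$. Admissible: $|{\rm level}(\widehat T)-{\rm level}(\widehat T')|\le1$ whenever $\widehat T'\in\mathcal N_\bullet(\widehat T)$. ${\tt refine}(\widehat{\mathcal T}_\bullet,\widehat{\mathcal M})$: $\widehat{\mathcal M}^{(0)}=\widehat{\mathcal M}$, $\widehat{\mathcal M}^{(i+1)}=\widehat{\mathcal M}^{(i)}\cup\bigcup_{\widehat T\in\widehat{\mathcal M}^{(i)}}\mathcal N^{\rm bad}_\bullet(\widehat T)$ until stationary; each $\widehat T$ in the final set is added to $\widehat\Omega^{{\rm level}(\widehat T)+1}$. *)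

From Stdlib Require Import Reals List Arith.
Import ListNotations.
Open Scope R_scope.

(* Points of R^d are functions nat -> R; only coordinates i < d matter.
   A box (closed axis-parallel) is a function nat -> R*R giving, for each
   coordinate i < d, the interval [fst (c i), snd (c i)]. *)
Definition point := nat -> R.
Definition box := nat -> (R * R).

Definition in_box (d : nat) (c : box) (x : point) : Prop :=
  forall i, (i < d)%nat -> fst (c i) <= x i <= snd (c i).

Definition unit_cube (d : nat) (x : point) : Prop :=
  forall i, (i < d)%nat -> 0 <= x i <= 1.

Definition box_in_set (d : nat) (c : box) (S : point -> Prop) : Prop :=
  forall x, in_box d c x -> S x.

Definition box_sub (d : nat) (c c' : box) : Prop :=
  forall x, in_box d c x -> in_box d c' x.

Definition knot (K : list R) (j : nat) : R := nth j K 0.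

(* p-open knot vector in [0,1]: nondecreasing, first p+1 knots equal 0,
   last p+1 knots equal 1, end multiplicities exactly p+1,
   interior multiplicities <= p. *)
Definition open_knots (p : nat) (K : list R) : Prop :=
  (2 * (p + 1) <= length K)%nat /\
  (forall j, (S j < length K)%nat -> knot K j <= knot K (S j)) /\
  (forall j, (j <= p)%nat -> knot K j = 0) /\
  (forall j, (j <= p)%nat -> knot K (length K - 1 - j) = 1) /\
  0 < knot K (S p) /\
  knot K (length K - 2 - p) < 1 /\
  (forall j, (j + p < length K)%nat -> knot K j = knot K (j + p) ->
       knot K j = 0 \/ knot K j = 1).

Fixpoint insert_mid (K : list R) : list R :=
  match K with
  | x :: ((y :: _) as t) =>
      if Req_EM_T x y then x :: insert_mid t
      else x :: (x + y) / 2 :: insert_mid t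
  | _ => K
  end.

Definition knots_lvl (K0 : nat -> list R) (k i : nat) : list R :=
  Nat.iter k insert_mid (K0 i).

Definition cell (d : nat) (K0 : nat -> list R) (k : nat) (c : box) : Prop :=
  forall i, (i < d)%nat ->
    exists j, (S j < length (knots_lvl K0 k i))%nat /\
      knot (knots_lvl K0 k i) j < knot (knots_lvl K0 k i) (S j) /\
      c i = (knot (knots_lvl K0 k i) j, knot (knots_lvl K0 k i) (S j)).

(* a tensor-product B-spline of B^k is identified by its multi-index j *)
Definition bspline_idx (d : nat) (p : nat -> nat) (K0 : nat -> list R)
    (k : nat) (j : nat -> nat) : Prop :=
  forall i, (i < d)%nat -> (j i + p i + 1 < length (knots_lvl K0 k i))%nat.

Definition supp (p : nat -> nat) (K0 : nat -> list R) (k : nat)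
    (j : nat -> nat) : box :=
  fun i => (knot (knots_lvl K0 k i) (j i),
            knot (knots_lvl K0 k i) (j i + p i + 1)).

Definition hier_mesh (d : nat) (K0 : nat -> list R)
    (Om : nat -> point -> Prop) : Prop :=
  (forall x, Om 0%nat x <-> unit_cube d x) /\
  (forall k x, Om (S k) x -> Om k x) /\
  (forall k x, Om (S k) x <->
      exists c, cell d K0 k c /\ box_in_set d c (Om (S k)) /\ in_box d c x) /\
  (exists N, forall x, ~ Om N x).

Definition in_mesh (d : nat) (K0 : nat -> list R)
    (Om : nat -> point -> Prop) (k : nat) (c : box) : Prop :=
  cell d K0 k c /\ box_in_set d c (Om k) /\ ~ box_in_set d c (Om (S k)).

Definition in_H (d : nat) (p : nat -> nat) (K0 : nat -> list R)
    (Om : nat -> point -> Prop) (k : nat) (j : nat -> nat) : Prop :=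
  bspline_idx d p K0 k j /\ box_in_set d (supp p K0 k j) (Om k) /\
  ~ box_in_set d (supp p K0 k j) (Om (S k)).

Definition share_support (d : nat) (p : nat -> nat) (K0 : nat -> list R)
    (Om : nat -> point -> Prop) (c c' : box) : Prop :=
  exists l j, in_H d p K0 Om l j /\
    box_sub d c (supp p K0 l j) /\ box_sub d c' (supp p K0 l j).

Definition neighbor (d : nat) (p : nat -> nat) (K0 : nat -> list R)
    (Om : nat -> point -> Prop) (k : nat) (c : box) (k' : nat) (c' : box)
    : Prop :=
  in_mesh d K0 Om k c /\ in_mesh d K0 Om k' c' /\ share_support d p K0 Om c c'.

Definition admissible (d : nat) (p : nat -> nat) (K0 : nat -> list R)
    (Om : nat -> point -> Prop) : Prop :=
  forall k c k' c', neighbor d p K0 Om k c k' c' ->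
    (k <= k' + 1)%nat /\ (k' <= k + 1)%nat.

(* The final marked set of refine(T_bullet, {c0}) (c0 of level k0):
   the least set containing c0 and closed under bad neighbors
   (= the stationary limit of the iteration M^(i)).
   marked c k means c is marked and has level k. *)
Inductive marked (d : nat) (p : nat -> nat) (K0 : nat -> list R)
    (Om : nat -> point -> Prop) (c0 : box) (k0 : nat) : box -> nat -> Prop :=
  | marked_base : marked d p K0 Om c0 k0 c0 k0
  | marked_step : forall c k c' k',
      marked d p K0 Om c0 k0 c k ->
      neighbor d p K0 Om k c k' c' -> (k' + 1 = k)%nat ->
      marked d p K0 Om c0 k0 c' k'.

Definition refine_omega (d : nat) (p : nat -> nat) (K0 : nat -> list R)
    (Om : nat -> point -> Prop) (c0 : box) (k0 : nat) : nat -> point -> Prop :=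
  fun k x =>
    match k with
    | O => Om O x
    | S m => Om (S m) x \/ exists c, marked d p K0 Om c0 k0 c m /\ in_box d c x
    end.

Fixpoint sumR (n : nat) (f : nat -> R) : R :=
  match n with
  | O => 0
  | S m => sumR m f + f m
  end.

Definition midpoint (c : box) : point := fun i => (fst (c i) + snd (c i)) / 2.

Definition mid_dist (d : nat) (c c' : box) : R :=
  sqrt (sumR d (fun i => (midpoint c i - midpoint c' i) ^ 2)).

From Stdlib Require Import Reals List Lia Lra Classical.
Open Scope R_scope.

(* Consecutive knots of level k are at most 2^-k apart (refinement halves
   every span of the initial knot vectors, whose spans are at most 1), so a
   cell of level k has edges at most 2^-k and a B-spline support of level l
   has width at most (p_i + 1) 2^-l in direction i.  Two neighbours c, c'
   share such a support, and the support contains a mesh cell of level l, so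
   admissibility forces level c' <= l + 1: hence the midpoints of neighbours
   are at most 2 (p_i + 1) 2^-level(c') apart in direction i.  Along a chain
   of bad neighbours the levels drop by one at each step, so these distances
   sum geometrically to 4 (p_i + 1) 2^-m for a marked cell of level m.  A new
   cell of level m + 1 meets a marked cell of level m, which gives the
   claim. *)

Fixpoint spans_le (h : R) (K : list R) : Prop :=
  match K with
  | x :: ((y :: _) as t) => x <= y <= x + h /\ spans_le h t
  | _ => True
  end.

Lemma spans_leP h K :
  spans_le h K <->
  forall j, (S j < length K)%nat -> knot K j <= knot K (S j) <= knot K j + h.
Proof.
  induction K as [|x [|y t] IH]; simpl.
  - split; [intros _ j Hj; lia | auto].
  - split; [intros _ j Hj; lia | auto].
  - rewrite IH; unfold knot; simpl. split.
    + intros [Hxy Ht] [|j] Hj; [exact Hxy|]. apply Ht. simpl in Hj; lia.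
    + intros H. split; [apply (H 0%nat); lia|].
      intros j Hj. apply (H (S j)). simpl in *; lia.
Qed.

Lemma insert_mid_head y t : exists r, insert_mid (y :: t) = y :: r.
Proof.
  destruct t as [|z t]; simpl; [now exists nil|].
  destruct (Req_EM_T y z); eexists; reflexivity.
Qed.

Lemma spans_le_insert_mid h K :
  0 <= h -> spans_le h K -> spans_le (h / 2) (insert_mid K).
Proof.
  intros Hh. induction K as [|x [|y t] IH]; intros HK; [exact I | exact I|].
  destruct HK as [Hxy Ht]. specialize (IH Ht).
  change (insert_mid (x :: y :: t)) with
    (if Req_EM_T x y then x :: insert_mid (y :: t)
     else x :: (x + y) / 2 :: insert_mid (y :: t)).
  destruct (insert_mid_head y t) as [r Hr]. rewrite Hr in IH |- *.
  destruct (Req_EM_T x y); simpl; repeat split; try lra; exact IH.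
Qed.

Lemma spans_le_add h K j n :
  spans_le h K -> (j + n < length K)%nat ->
  knot K (j + n) <= knot K j + INR n * h.
Proof.
  intros HK. induction n as [|n IH]; intros Hn.
  - rewrite Nat.add_0_r; simpl; lra.
  - rewrite Nat.add_succ_r, S_INR.
    pose proof (proj1 (spans_leP h K) HK (j + n)%nat ltac:(lia)).
    specialize (IH ltac:(lia)). lra.
Qed.

Lemma nondecr_le (f : nat -> R) n :
  (forall j, (S j < n)%nat -> f j <= f (S j)) ->
  forall a b, (a <= b)%nat -> (b < n)%nat -> f a <= f b.
Proof.
  intros Hf a b Hab. induction Hab as [|b Hab IH]; intros Hb; [lra|].
  specialize (IH ltac:(lia)). specialize (Hf b ltac:(lia)). lra.
Qed.

Lemma knot_nondecr h K a b :
  spans_le h K -> (a <= b)%nat -> (b < length K)%nat -> knot K a <= knot K b.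
Proof.
  intros HK. apply nondecr_le. intros j Hj. apply (proj1 (spans_leP h K) HK j Hj).
Qed.

Lemma open_knots_spans_le p K : open_knots p K -> spans_le 1 K.
Proof.
  intros (Hlen & Hmono & H0 & H1 & _).
  apply spans_leP. intros j Hj.
  assert (knot K 0 <= knot K j) by (apply (nondecr_le _ (length K)); auto; lia).
  assert (knot K (S j) <= knot K (length K - 1 - 0))
    by (apply (nondecr_le _ (length K)); auto; lia).
  rewrite H0, H1 in * by lia. specialize (Hmono j Hj). lra.
Qed.

Lemma knots_lvl_spans_le d p K0 :
  (forall i, (i < d)%nat -> open_knots (p i) (K0 i)) ->
  forall k i, (i < d)%nat -> spans_le ((/ 2) ^ k) (knots_lvl K0 k i).
Proof.
  intros HK k i Hi. induction k as [|k IH].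
  - exact (open_knots_spans_le _ _ (HK i Hi)).
  - replace ((/ 2) ^ S k) with ((/ 2) ^ k / 2) by (simpl; field).
    apply spans_le_insert_mid; [apply pow_le; lra | exact IH].
Qed.

Lemma pow_half_antitone a b : (a <= b)%nat -> (/ 2) ^ b <= (/ 2) ^ a.
Proof.
  induction 1 as [|b _ IH]; [lra|].
  simpl. assert (0 <= (/ 2) ^ b) by (apply pow_le; lra). lra.
Qed.

Lemma nondegenerate_span_containing (f : nat -> R) n : forall a x,
  f a <= x <= f (a + n)%nat -> f a < f (a + n)%nat ->
  exists r, (a <= r < a + n)%nat /\ f r <= x <= f (S r) /\ f r < f (S r).
Proof.
  induction n as [|n IH]; intros a x Hx Hlt.
  - rewrite Nat.add_0_r in Hlt. lra.
  - destruct (Rlt_le_dec x (f (S a))) as [Hxa|Hax].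
    + exists a. repeat split; lia || lra.
    + rewrite Nat.add_succ_r, <- Nat.add_succ_l in Hx, Hlt.
      destruct (Rlt_le_dec (f (S a)) (f (S a + n)%nat)) as [Hsa|Hsa].
      * destruct (IH (S a) x) as (r & Hr & Hrx & Hrlt); [lra | exact Hsa|].
        exists r. repeat split; lia || lra.
      * (* then x = f (S a) = f (a + S n) *)
        exists a. repeat split; lia || lra.
Qed.

Lemma finite_choice (P : nat -> nat -> Prop) d :
  (forall i, (i < d)%nat -> exists r, P i r) ->
  exists f : nat -> nat, forall i, (i < d)%nat -> P i (f i).
Proof.
  induction d as [|d IH]; intros H.
  - exists (fun _ => 0%nat). intros; lia.
  - destruct IH as [f Hf]; [intros; apply H; lia|].
    destruct (H d ltac:(lia)) as [r Hr].
    exists (fun i => if Nat.eqb i d then r else f i).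
    intros i Hi. destruct (Nat.eqb_spec i d); [subst; exact Hr|]. apply Hf; lia.
Qed.

Lemma nat_fun_bounded (p : nat -> nat) d :
  exists P, forall i, (i < d)%nat -> (p i <= P)%nat.
Proof.
  induction d as [|d [P HP]]; [exists 0%nat; intros; lia|].
  exists (Nat.max P (p d)). intros i Hi.
  destruct (Nat.eq_dec i d) as [->|]; [lia|]. specialize (HP i ltac:(lia)). lia.
Qed.

Lemma exists_outside_of_not_box_in_set d c (S : point -> Prop) :
  ~ box_in_set d c S -> exists x, in_box d c x /\ ~ S x.
Proof.
  intros H. apply NNPP. intros Hno. apply H. intros x Hx.
  apply NNPP. intros Hx'. apply Hno. eauto.
Qed.

Section HierarchicalMesh.

Variables (d : nat) (p : nat -> nat) (K0 : nat -> list R).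
Hypothesis knots_fine :
  forall k i, (i < d)%nat -> spans_le ((/ 2) ^ k) (knots_lvl K0 k i).

Lemma cell_edge k c :
  cell d K0 k c -> forall i, (i < d)%nat ->
  fst (c i) < snd (c i) <= fst (c i) + (/ 2) ^ k.
Proof.
  intros Hc i Hi. destruct (Hc i Hi) as (j & Hj & Hlt & ->); simpl.
  pose proof (proj1 (spans_leP _ _) (knots_fine k i Hi) j Hj). lra.
Qed.

Lemma midpoint_in_cell k c : cell d K0 k c -> in_box d c (midpoint c).
Proof.
  intros Hc i Hi. pose proof (cell_edge k c Hc i Hi). unfold midpoint. lra.
Qed.

Lemma point_near_midpoint k c x :
  cell d K0 k c -> in_box d c x -> forall i, (i < d)%nat ->
  Rabs (x i - midpoint c i) <= (/ 2) ^ k / 2.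
Proof.
  intros Hc Hx i Hi. pose proof (cell_edge k c Hc i Hi). specialize (Hx i Hi).
  unfold midpoint. apply Rabs_le. lra.
Qed.

Lemma supp_width l j :
  bspline_idx d p K0 l j -> forall i, (i < d)%nat ->
  snd (supp p K0 l j i) <= fst (supp p K0 l j i) + INR (p i + 1) * (/ 2) ^ l.
Proof.
  intros Hj i Hi. unfold supp; simpl.
  rewrite <- Nat.add_assoc.
  apply spans_le_add; [apply knots_fine; exact Hi|]. specialize (Hj i Hi). lia.
Qed.

Lemma supp_nondegenerate_of_cell k c l j :
  cell d K0 k c -> box_sub d c (supp p K0 l j) -> forall i, (i < d)%nat ->
  fst (supp p K0 l j i) < snd (supp p K0 l j i).
Proof.
  intros Hc Hsub i Hi. pose proof (cell_edge k c Hc i Hi).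
  assert (Hlo : in_box d c (fun t => fst (c t))).
  { intros t Ht. pose proof (cell_edge k c Hc t Ht). lra. }
  assert (Hhi : in_box d c (fun t => snd (c t))).
  { intros t Ht. pose proof (cell_edge k c Hc t Ht). lra. }
  pose proof (Hsub _ Hlo i Hi). pose proof (Hsub _ Hhi i Hi). simpl in *. lra.
Qed.

(* A point of the support outside Omega^(l+1) lies in a nondegenerate knot
   span in every direction; these spans form the required cell of level l. *)
Lemma mesh_cell_in_supp Om l j :
  in_H d p K0 Om l j ->
  (forall i, (i < d)%nat -> fst (supp p K0 l j i) < snd (supp p K0 l j i)) ->
  exists Q, in_mesh d K0 Om l Q /\ box_sub d Q (supp p K0 l j).
Proof.
  intros (Hidx & HsOm & HsOm') Hnd.
  destruct (exists_outside_of_not_box_in_set _ _ _ HsOm') as (x & Hx & Hnx).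
  set (kn i := knot (knots_lvl K0 l i)).
  assert (Hspan : forall i, (i < d)%nat -> exists r,
    (j i <= r < j i + (p i + 1))%nat /\
    kn i r <= x i <= kn i (S r) /\ kn i r < kn i (S r)).
  { intros i Hi. apply nondegenerate_span_containing;
      rewrite Nat.add_assoc; [apply (Hx i Hi) | apply (Hnd i Hi)]. }
  destruct (finite_choice _ d Hspan) as [r Hr].
  set (Q := fun i => (kn i (r i), kn i (S (r i)))).
  assert (HQsub : box_sub d Q (supp p K0 l j)).
  { intros y Hy i Hi. specialize (Hy i Hi). specialize (Hidx i Hi).
    destruct (Hr i Hi) as (Hri & _). unfold Q, supp in *; simpl in *.
    assert (kn i (j i) <= kn i (r i))
      by (apply (knot_nondecr _ _ _ _ (knots_fine l i Hi)); lia).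
    assert (kn i (S (r i)) <= kn i (j i + p i + 1)%nat)
      by (apply (knot_nondecr _ _ _ _ (knots_fine l i Hi)); lia).
    unfold kn in *. lra. }
  exists Q. split; [|exact HQsub]. split; [|split].
  - intros i Hi. destruct (Hr i Hi) as (Hri & _ & Hlt). specialize (Hidx i Hi).
    exists (r i). repeat split; [lia | exact Hlt].
  - intros y Hy. apply HsOm, HQsub, Hy.
  - intros HQ. apply Hnx, HQ. intros i Hi. apply (Hr i Hi).
Qed.

Lemma neighbor_level_le_supp Om l j k' c' :
  admissible d p K0 Om -> in_H d p K0 Om l j ->
  in_mesh d K0 Om k' c' -> box_sub d c' (supp p K0 l j) -> (k' <= l + 1)%nat.
Proof.
  intros Hadm Hl Hc' Hsub.
  destruct (mesh_cell_in_supp Om l j Hl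
              (supp_nondegenerate_of_cell k' c' l j (proj1 Hc') Hsub))
    as (Q & HQ & HQsub).
  apply (Hadm l Q k' c'). split; [exact HQ|]. split; [exact Hc'|]. now exists l, j.
Qed.

Lemma neighbor_midpoint_close Om k c k' c' :
  admissible d p K0 Om -> neighbor d p K0 Om k c k' c' ->
  forall i, (i < d)%nat ->
  Rabs (midpoint c i - midpoint c' i) <= 2 * INR (p i + 1) * (/ 2) ^ k'.
Proof.
  intros Hadm (Hc & Hc' & l & j & Hl & Hsub & Hsub') i Hi.
  pose proof (neighbor_level_le_supp Om l j k' c' Hadm Hl Hc' Hsub') as Hlvl.
  pose proof (pow_half_antitone _ _ Hlvl) as Hpow.
  rewrite pow_add in Hpow. simpl in Hpow.
  pose proof (Hsub _ (midpoint_in_cell k c (proj1 Hc)) i Hi).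
  pose proof (Hsub' _ (midpoint_in_cell k' c' (proj1 Hc')) i Hi).
  pose proof (supp_width l j (proj1 Hl) i Hi).
  pose proof (pos_INR (p i + 1)).
  assert (INR (p i + 1) * (/ 2) ^ l <= INR (p i + 1) * (2 * (/ 2) ^ k'))
    by (apply Rmult_le_compat_l; lra).
  apply Rabs_le. lra.
Qed.

Lemma marked_in_mesh Om T' k0 c m :
  in_mesh d K0 Om k0 T' -> marked d p K0 Om T' k0 c m -> in_mesh d K0 Om m c.
Proof.
  intros HT'. induction 1 as [|c k c' k' _ _ (_ & Hc' & _) _]; assumption.
Qed.

Lemma marked_midpoint_close Om T' k0 c m :
  admissible d p K0 Om -> marked d p K0 Om T' k0 c m ->
  forall i, (i < d)%nat ->
  Rabs (midpoint c i - midpoint T' i) <= 4 * INR (p i + 1) * (/ 2) ^ m.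
Proof.
  intros Hadm. induction 1 as [|c k c' k' _ IH Hnb <-]; intros i Hi.
  - rewrite Rminus_diag, Rabs_R0.
    pose proof (pos_INR (p i + 1)). pose proof (pow_le (/ 2) k0 ltac:(lra)).
    nra.
  - specialize (IH i Hi). rewrite pow_add in IH. simpl in IH.
    pose proof (neighbor_midpoint_close Om _ _ _ _ Hadm Hnb i Hi) as Hstep.
    rewrite Rabs_minus_sym in Hstep.
    pose proof (Rdist_tri (midpoint c' i) (midpoint T' i) (midpoint c i)) as Htri.
    unfold Rdist in Htri. lra.
Qed.

Lemma cell_meeting_marked_midpoint_close Om T' k0 c m T x :
  admissible d p K0 Om -> in_mesh d K0 Om k0 T' ->
  marked d p K0 Om T' k0 c m -> cell d K0 (S m) T ->
  in_box d T x -> in_box d c x -> forall i, (i < d)%nat ->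
  Rabs (midpoint T i - midpoint T' i) <= (8 * INR (p i + 1) + 2) * (/ 2) ^ S m.
Proof.
  intros Hadm HT' Hc HT HxT Hxc i Hi.
  pose proof (point_near_midpoint _ _ _ HT HxT i Hi) as HxT'.
  rewrite Rabs_minus_sym in HxT'.
  pose proof (point_near_midpoint _ _ _
                (proj1 (marked_in_mesh Om _ _ _ _ HT' Hc)) Hxc i Hi) as Hxc'.
  pose proof (marked_midpoint_close Om _ _ _ _ Hadm Hc i Hi) as Hcm.
  pose proof (Rdist_tri (midpoint T i) (midpoint T' i) (x i)) as HtriT.
  pose proof (Rdist_tri (x i) (midpoint T' i) (midpoint c i)) as Htrix.
  unfold Rdist in HtriT, Htrix.
  pose proof (pow_le (/ 2) m ltac:(lra)). simpl pow in *. lra.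
Qed.

End HierarchicalMesh.

Lemma new_refined_cell_meets_marked d p K0 Om T' kT' T kT :
  in_mesh d K0 (refine_omega d p K0 Om T' kT') kT T ->
  ~ (exists l, in_mesh d K0 Om l T) ->
  exists m c x, kT = S m /\ marked d p K0 Om T' kT' c m /\
    in_box d T x /\ in_box d c x.
Proof.
  intros (HTc & HTin & HTout) Hnew.
  destruct kT as [|m].
  { exfalso. apply Hnew. exists 0%nat. repeat split; auto.
    intros H. apply HTout. intros y Hy. left. apply H, Hy. }
  assert (HnotS : ~ box_in_set d T (Om (S m))).
  { intros H. apply Hnew. exists (S m). repeat split; auto.
    intros H'. apply HTout. intros y Hy. left. apply H', Hy. }
  destruct (exists_outside_of_not_box_in_set _ _ _ HnotS) as (x & Hx & Hnx).
  destruct (HTin x Hx) as [Hin | (c & Hc & Hxc)]; [contradiction|].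
  now exists m, c, x.
Qed.

Lemma mid_dist_le d c c' B :
  0 <= B -> (forall i, (i < d)%nat -> Rabs (midpoint c i - midpoint c' i) <= B) ->
  mid_dist d c c' <= sqrt (INR d) * B.
Proof.
  intros HB Hco. unfold mid_dist.
  rewrite <- (sqrt_pow2 B HB), <- sqrt_mult_alt by apply pos_INR.
  apply sqrt_le_1_alt.
  assert (Hsum : forall n, (n <= d)%nat ->
    sumR n (fun i => (midpoint c i - midpoint c' i) ^ 2) <= INR n * B ^ 2).
  { induction n as [|n IH]; intros Hn; cbn [sumR]; [simpl; lra|].
    rewrite S_INR. specialize (IH ltac:(lia)).
    rewrite <- (pow2_abs (midpoint c n - midpoint c' n)).
    pose proof (pow_incr _ B 2 (conj (Rabs_pos _) (Hco n ltac:(lia)))). lra. }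
  apply Hsum. lia.
Qed.

Theorem lemma5p5 (d : nat) (p : nat -> nat) (K0 : nat -> list R) :
  (2 <= d)%nat ->
  (forall i, (i < d)%nat -> (1 <= p i)%nat) ->
  (forall i, (i < d)%nat -> open_knots (p i) (K0 i)) ->
  exists Cdist : R, 0 < Cdist /\
    forall (Om : nat -> point -> Prop),
      hier_mesh d K0 Om ->
      admissible d p K0 Om ->
      forall (T' : box) (kT' : nat), in_mesh d K0 Om kT' T' ->
      forall (T : box) (kT : nat),
        in_mesh d K0 (refine_omega d p K0 Om T' kT') kT T ->
        ~ (exists l, in_mesh d K0 Om l T) ->
        mid_dist d T T' <= Cdist * (/ 2) ^ kT.
Proof.
  intros Hd _ Hopen.
  pose proof (knots_lvl_spans_le d p K0 Hopen) as Hfine.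
  destruct (nat_fun_bounded p d) as [P HP].
  pose proof (pos_INR (P + 1)) as HP0.
  exists (sqrt (INR d) * (8 * INR (P + 1) + 2)). split.
  { apply Rmult_lt_0_compat; [apply sqrt_lt_R0, lt_0_INR; lia | lra]. }
  intros Om _ Hadm T' kT' HT' T kT HT Hnew.
  destruct (new_refined_cell_meets_marked _ _ _ _ _ _ _ _ HT Hnew)
    as (m & c & x & -> & Hc & HxT & Hxc).
  pose proof (pow_le (/ 2) (S m) ltac:(lra)) as Hh.
  rewrite Rmult_assoc. apply mid_dist_le; [nra|]. intros i Hi.
  pose proof (cell_meeting_marked_midpoint_close d p K0 Hfine Om _ _ _ _ _ _
                Hadm HT' Hc (proj1 HT) HxT Hxc i Hi) as Hclose.
  assert (INR (p i + 1) <= INR (P + 1)) by (apply le_INR; specialize (HP i Hi); lia).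
  nra.
Qed.
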